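(* Let $K$ be a field of characteristic $p$ with $K \neq \mathbb{F}_2$, let $X$ be a quasi-projective variety over $K$, let $S \subseteq \mathbb{N}_0$ be a $K$-DML set over $X$, and let $L$ be an extension field of $K$. Then $S$ is an $L$-DML set over $X_L := X \times_K L$.
   Context: For a field $K$ and a quasi-projective variety $X$ over $K$, a set $S \subseteq \mathbb{N}_0$ is a $K$-DML set over $X$ if there exist an endomorphism $\Phi$ of $X$ (a morphism $X \to X$ defined over $K$), a point $\alpha \in X(K)$ and a closed subvariety $V \subseteq X$ defined over $K$ (not necessarily irreducible) such that $S = \{ n \in \mathbb{N}_0 : \Phi^n(\alpha) \in V(K)\}$. *)

From HB Require Import structures.
From mathcomp Require Import all_boot all_order all_algebra.
From mathcomp Require Import mpoly.
From Stdlib Require List.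
Set Implicit Arguments. Unset Strict Implicit. Unset Printing Implicit Defensive.
Import GRing.Theory.
Local Open Scope ring_scope.

(* Concrete model of quasi-projective varieties over a field K:
   X = V(qp_eqs) \ V(qp_open) inside P^(qp_dim) (homogeneous coordinates
   indexed by 'I_(qp_dim.+1)), taken with its reduced structure.
   Points of P^N over a field are represented by nonzero coordinate vectors. *)
Record qp_data (K : fieldType) := QPData {
  qp_dim : nat;
  qp_eqs : seq {mpoly K[qp_dim.+1]};
  qp_open : seq {mpoly K[qp_dim.+1]} }.

Definition homogeneous (K : fieldType) (n : nat) (p : {mpoly K[n]}) : Prop :=
  exists d : nat, p \is d.-homog.

Definition is_qpvar (K : fieldType) (X : qp_data K) : Prop :=
  (forall f, f \in qp_eqs X -> homogeneous f) /\
  (forall g, g \in qp_open X -> homogeneous g).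

Definition nonzero_vec (L : fieldType) (n : nat) (v : 'I_n -> L) : bool :=
  [exists j, v j != 0].

Definition is_point (K L : fieldType) (sigma : {rmorphism K -> L})
    (X : qp_data K) (v : 'I_(qp_dim X).+1 -> L) : bool :=
  [&& nonzero_vec v,
      all (fun f => (map_mpoly sigma f).@[v] == 0) (qp_eqs X) &
      has (fun g => (map_mpoly sigma g).@[v] != 0) (qp_open X)].

Arguments is_point {K L} sigma X v.

Definition piece_eval (K L : fieldType) (sigma : {rmorphism K -> L}) (n : nat)
    (P : 'I_n -> {mpoly K[n]}) (v : 'I_n -> L) : 'I_n -> L :=
  fun j => (map_mpoly sigma (P j)).@[v].

(* Phi (a finite list of pieces, each given by homogeneous polynomials of a
   common degree with coefficients in K) defines an endomorphism of X over K:
   at every geometric point (over every field extension of K) some piece is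
   defined, every defined piece lands in X, and defined pieces agree as
   points of projective space. *)
Definition is_endo (K : fieldType) (X : qp_data K)
    (Phi : seq ('I_(qp_dim X).+1 -> {mpoly K[(qp_dim X).+1]})) : Prop :=
  (forall P, List.In P Phi -> exists d : nat, forall j, P j \is d.-homog) /\
  forall (L : fieldType) (sigma : {rmorphism K -> L}) (v : 'I_(qp_dim X).+1 -> L),
    is_point sigma X v ->
    (exists P, List.In P Phi /\ nonzero_vec (piece_eval sigma P v)) /\
    (forall P, List.In P Phi -> nonzero_vec (piece_eval sigma P v) ->
       is_point sigma X (piece_eval sigma P v)) /\
    (forall P Q, List.In P Phi -> List.In Q Phi ->
       nonzero_vec (piece_eval sigma P v) -> nonzero_vec (piece_eval sigma Q v) ->
       exists c : L, c != 0 /\ forall j, piece_eval sigma P v j = c * piece_eval sigma Q v j).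

Arguments is_endo {K} X Phi.

Definition endo_apply (K : fieldType) (n : nat) (Phi : seq ('I_n -> {mpoly K[n]}))
    (v : 'I_n -> K) : 'I_n -> K :=
  let vals := [seq (fun j => (P j).@[v]) | P <- Phi] in
  nth v vals (find (fun w => nonzero_vec w) vals).

Definition is_Kpoint (K : fieldType) (X : qp_data K) (v : 'I_(qp_dim X).+1 -> K) : bool :=
  [&& nonzero_vec v, all (fun f => f.@[v] == 0) (qp_eqs X) &
      has (fun g => g.@[v] != 0) (qp_open X)].

Arguments is_Kpoint {K} X v.

(* S is a K-DML set over X: there are an endomorphism Phi of X over K, a point
   alpha in X(K) and a closed subvariety V = X cap V(H) of X defined over K
   (H homogeneous over K) such that S = {n | Phi^n(alpha) in V(K)}. *)
Definition DML_set (K : fieldType) (X : qp_data K) (S : nat -> Prop) : Prop :=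
  exists (Phi : seq ('I_(qp_dim X).+1 -> {mpoly K[(qp_dim X).+1]}))
         (alpha : 'I_(qp_dim X).+1 -> K) (H : seq {mpoly K[(qp_dim X).+1]}),
    is_endo X Phi /\ is_Kpoint X alpha /\ (forall h, h \in H -> homogeneous h) /\
    forall n : nat, S n <-> all (fun h => h.@[iter n (endo_apply Phi) alpha] == 0) H.

Definition base_change (K L : fieldType) (sigma : {rmorphism K -> L}) (X : qp_data K)
  : qp_data L :=
  @QPData L (qp_dim X) [seq map_mpoly sigma f | f <- qp_eqs X]
                       [seq map_mpoly sigma g | g <- qp_open X].

From HB Require Import structures.
From mathcomp Require Import all_boot all_order all_algebra.
From mathcomp Require Import mpoly.
From Stdlib Require List.
From Stdlib Require Import FunctionalExtensionality.
Set Implicit Arguments. Unset Strict Implicit. Unset Printing Implicit Defensive.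
Local Open Scope ring_scope.
Import GRing.Theory.

(* Base change along sigma : K -> L sends a DML datum (Phi, alpha, V) for X to
   (Phi_L, alpha_L, V_L) for X_L.  The coordinates of Phi_L^n(alpha_L) are the
   images under sigma of those of Phi^n(alpha), and sigma is injective, so
   Phi_L^n(alpha_L) lies in V_L exactly when Phi^n(alpha) lies in V.  A point of
   X_L over an extension tau : L -> M is a point of X over tau \o sigma, which
   is why Phi_L is again an endomorphism.  Neither the characteristic of K nor
   the hypothesis K <> F_2 plays a role. *)

Lemma nth_map_default (A B : Type) (f : A -> B) (x0 : A) (s : seq A) i :
  nth (f x0) [seq f x | x <- s] i = f (nth x0 s i).
Proof. by elim: s i => [|a s IH] [|i] //=. Qed.

Section MapMpoly.
Variables (n : nat) (K L : fieldType) (sigma : {rmorphism K -> L}).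

Lemma meval_map_mpoly (f : {mpoly K[n]}) (v : 'I_n -> K) :
  (map_mpoly sigma f).@[sigma \o v] = sigma f.@[v].
Proof.
rewrite !mevalE rmorph_sum (perm_big _ (msupp_map_mpoly _ (fmorph_inj sigma))) /=.
apply: eq_bigr => m _; rewrite mcoeff_map_mpoly rmorphM rmorph_prod /=.
by congr (_ * _); apply: eq_bigr => i _; rewrite rmorphXn.
Qed.

Lemma meval_map_mpoly_eq0 (f : {mpoly K[n]}) (v : 'I_n -> K) :
  ((map_mpoly sigma f).@[sigma \o v] == 0) = (f.@[v] == 0).
Proof. by rewrite meval_map_mpoly fmorph_eq0. Qed.

Lemma dhomog_map_mpoly (d : nat) (f : {mpoly K[n]}) :
  (map_mpoly sigma f \is d.-homog) = (f \is d.-homog).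
Proof. by rewrite !dhomogE (perm_all _ (msupp_map_mpoly _ (fmorph_inj sigma))). Qed.

Lemma homogeneous_map_mpoly (f : {mpoly K[n]}) :
  homogeneous f -> homogeneous (map_mpoly sigma f).
Proof. by case=> d hd; exists d; rewrite dhomog_map_mpoly. Qed.

Lemma map_mpoly_map (M : fieldType) (tau : {rmorphism L -> M}) (f : {mpoly K[n]}) :
  map_mpoly tau (map_mpoly sigma f) = map_mpoly (tau \o sigma) f.
Proof. by apply/mpolyP => m; rewrite !mcoeff_map_mpoly. Qed.

Lemma nonzero_vec_map (v : 'I_n -> K) : nonzero_vec (sigma \o v) = nonzero_vec v.
Proof. by apply: eq_existsb => j; rewrite /= fmorph_eq0. Qed.

Definition map_piece (P : 'I_n -> {mpoly K[n]}) : 'I_n -> {mpoly L[n]} :=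
  fun j => map_mpoly sigma (P j).

Lemma piece_eval_map_piece (M : fieldType) (tau : {rmorphism L -> M})
    (P : 'I_n -> {mpoly K[n]}) (v : 'I_n -> M) :
  piece_eval tau (map_piece P) v = piece_eval (tau \o sigma) P v.
Proof. by apply: functional_extensionality => j; rewrite /piece_eval map_mpoly_map. Qed.

Lemma endo_apply_map_piece (Phi : seq ('I_n -> {mpoly K[n]})) (v : 'I_n -> K) :
  endo_apply [seq map_piece P | P <- Phi] (sigma \o v) = sigma \o endo_apply Phi v.
Proof.
rewrite /endo_apply; set vals := [seq (fun j => (P j).@[v]) | P <- Phi].
have -> : [seq (fun j => (w j).@[sigma \o v]) | w <- [seq map_piece P | P <- Phi]]
          = [seq sigma \o w | w <- vals].
  rewrite -!map_comp; apply: eq_map => P.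
  by apply: functional_extensionality => j; apply: meval_map_mpoly.
rewrite find_map (eq_find (a2 := fun w => nonzero_vec w)) ?nth_map_default //.
by move=> w; rewrite /= nonzero_vec_map.
Qed.

Lemma iter_endo_apply_map_piece (Phi : seq ('I_n -> {mpoly K[n]})) (v : 'I_n -> K) k :
  iter k (endo_apply [seq map_piece P | P <- Phi]) (sigma \o v)
  = sigma \o iter k (endo_apply Phi) v.
Proof. by elim: k => [|k IH] //=; rewrite IH endo_apply_map_piece. Qed.

End MapMpoly.

Section BaseChange.
Variables (K L : fieldType) (sigma : {rmorphism K -> L}) (X : qp_data K).

Lemma is_point_base_change (M : fieldType) (tau : {rmorphism L -> M})
    (v : 'I_(qp_dim X).+1 -> M) :
  is_point tau (base_change sigma X) v = is_point (tau \o sigma) X v.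
Proof.
rewrite /is_point /= all_map has_map.
by congr [&& _, _ & _]; [apply: eq_all | apply: eq_has] => f /=; rewrite map_mpoly_map.
Qed.

Lemma is_Kpoint_base_change (v : 'I_(qp_dim X).+1 -> K) :
  is_Kpoint (base_change sigma X) (sigma \o v) = is_Kpoint X v.
Proof.
rewrite /is_Kpoint /= nonzero_vec_map all_map has_map.
by congr [&& _, _ & _]; [apply: eq_all | apply: eq_has] => f /=;
  rewrite meval_map_mpoly_eq0.
Qed.

Lemma is_endo_base_change (Phi : seq ('I_(qp_dim X).+1 -> {mpoly K[(qp_dim X).+1]})) :
  is_endo X Phi -> is_endo (base_change sigma X) [seq map_piece sigma P | P <- Phi].
Proof.
case=> homog_Phi endo_Phi; split.
  move=> _ /List.in_map_iff [P [<- PPhi]]; have [d homP] := homog_Phi P PPhi.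
  by exists d => j; rewrite dhomog_map_mpoly.
move=> M tau v; rewrite is_point_base_change => vX.
have [[P [PPhi Pv]] [Phi_X Phi_agree]] := endo_Phi M (tau \o sigma) v vX.
split; [|split].
- by exists (map_piece sigma P); rewrite piece_eval_map_piece; split=> //; apply: List.in_map.
- move=> _ /List.in_map_iff [Q [<- QPhi]].
  rewrite !piece_eval_map_piece is_point_base_change; exact: Phi_X.
- move=> _ _ /List.in_map_iff [P1 [<- P1Phi]] /List.in_map_iff [Q1 [<- Q1Phi]].
  rewrite !piece_eval_map_piece; exact: Phi_agree.
Qed.

Lemma DML_set_base_change (S : nat -> Prop) :
  DML_set X S -> DML_set (base_change sigma X) S.
Proof.
case=> Phi [alpha [H [endo_Phi [alphaX [homog_H S_E]]]]].
exists [seq map_piece sigma P | P <- Phi], (sigma \o alpha),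
  [seq map_mpoly sigma h | h <- H].
split; first exact: is_endo_base_change.
split; first by rewrite is_Kpoint_base_change.
split=> [_ /mapP [h hH ->]|k]; first exact/homogeneous_map_mpoly/homog_H.
rewrite S_E iter_endo_apply_map_piece all_map.
by rewrite (eq_all (fun h => meval_map_mpoly_eq0 sigma h _)).
Qed.

End BaseChange.

Theorem lemma3p2 (K : fieldType) (p : nat) (hp : p \in [pchar K])
    (hK : exists x : K, x != 0 /\ x != 1)
    (X : qp_data K) (hX : is_qpvar X) (S : nat -> Prop) (hS : DML_set X S)
    (L : fieldType) (sigma : {rmorphism K -> L}) :
  DML_set (base_change sigma X) S.
Proof. exact: DML_set_base_change. Qed.
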